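(* Let $p$ be a prime, $\mathbb F=\mathbb F_{p^2}$, $\beta\in\mathbb F$ with $\beta^p-\beta=1$, and in the rational function field $\mathbb F(y)$ put $x=y^p-y$ and $$\delta(y)=\prod_{a=1}^{p-1}\Big(\frac{\beta-(y+a)}{y+a}\Big)^{a}.$$ Then (i) in $\Omega^1_{\mathbb F(y)/\mathbb F}$, $$y^p\frac{dx}{x}-(\beta-y)^p\frac{dx}{1-x}=\frac{d\delta(y)}{\delta(y)};$$ (ii) $\dfrac{\delta(y+1)}{\delta(y)}\equiv\dfrac{x}{1-x}\mod \mathbb F(y)^{\times p}$. *)

From HB Require Import structures.
From mathcomp Require Import all_boot all_order all_algebra.
From mathcomp Require Import fraction generic_quotient.
Set Implicit Arguments. Unset Strict Implicit. Unset Printing Implicit Defensive.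
Import Order.TTheory GRing.Theory Num.Theory.
Local Open Scope ring_scope.
Notation tofracp F := (@FracField.tofrac {poly F}).

Definition ratfun (F : fieldType) := {fraction {poly F}}.

Definition ry (F : fieldType) : ratfun F := tofracp F 'X.
Definition rc (F : fieldType) (c : F) : ratfun F := tofracp F c%:P.

(* Universal derivation d : F(y) -> Omega^1_{F(y)/F}.
   Omega^1_{F(y)/F} is the free F(y)-module of rank one on dy; we represent a
   differential  g dy  by its coefficient g : F(y).  Then  d f = (df/dy) dy,
   where df/dy is the formal derivative of the rational function f computed
   from any representative n/d by the quotient rule. *)
Definition dfrac (F : fieldType) (f : ratfun F) : ratfun F :=
  let r := repr f in
  let n := \n_r in let d := \d_r in
  tofracp F (n^`() * d - n * d^`()) / tofracp F (d ^+ 2).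

Definition delta (F : fieldType) (p : nat) (beta : F) (t : ratfun F) : ratfun F :=
  \prod_(1 <= a < p) ((rc beta - (t + a%:R)) / (t + a%:R)) ^+ a.

From HB Require Import structures.
From mathcomp Require Import all_boot all_order all_algebra.
From mathcomp Require Import fraction generic_quotient.
From mathcomp Require Import finfield.
From mathcomp Require Import ring.
Set Implicit Arguments. Unset Strict Implicit. Unset Printing Implicit Defensive.
Import Order.TTheory GRing.Theory Num.Theory.
Local Open Scope ring_scope.
Local Open Scope quotient_scope.
Local Notation "x %:F" := (@FracField.tofrac _ x).

(* Write u_a = y + a and v_a = beta - (y + a), so that delta(y) = prod_a (v_a/u_a)^a
   with a running over F_p (the factor a = 0 is trivial).  In characteristic p,
   prod_(a in F_p) (t + a) = t^p - t; hence prod_a u_a = x and, since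
   beta^p = beta + 1, prod_a v_a = 1 - x.  The differential d acts on F(y) as a
   derivation with dy = 1 and d beta = 0, so logarithmic differentiation of these
   products gives sum_a 1/u_a = -1/x and sum_a 1/v_a = -1/(1-x).
   (i) Writing a = u_a - y = (beta - y) - v_a turns
   dlog delta = sum_a a (dv_a/v_a - du_a/u_a) into y sum_a 1/u_a - (beta - y) sum_a 1/v_a,
   and y^p = x + y, (beta - y)^p = 1 - x + (beta - y) give the left-hand side.
   (ii) Replacing y by y + 1 shifts the index a by one, so with h_a = v_a/u_a
   (periodic of period p) the quotient delta(y+1)/delta(y) telescopes to
   h_0^p / prod_a h_a = h_0^p x/(1-x). *)

Lemma tofrac_numden (R : idomainType) (f : {fraction R}) :
  f * (\d_(repr f))%:F = (\n_(repr f))%:F.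
Proof.
set r := repr f; have -> : f = \pi r by rewrite /r reprK.
unlock FracField.tofrac.
rewrite !piE /FracField.mulf /=; apply/eqmodP => /=.
rewrite FracField.equivfE /= !numden_Ratio ?mulf_neq0 ?oner_neq0 ?denom_ratioP //.
by rewrite !mulr1 mulrC.
Qed.

Lemma fracP (R : idomainType) (f : {fraction R}) :
  exists n d, d != 0 /\ f = n%:F / d%:F.
Proof.
exists (\n_(repr f)), (\d_(repr f)); split; first exact: denom_ratioP.
by rewrite -tofrac_numden mulfK // tofrac_eq0 denom_ratioP.
Qed.

Lemma deriv_quotient_scale (R : comRingType) (n d c : {poly R}) :
  (n * c)^`() * (d * c) - n * c * (d * c)^`() =
  c ^+ 2 * (n^`() * d - n * d^`()).
Proof. by rewrite !derivM; ring. Qed.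

Lemma deriv_quotient_mul (R : comRingType) (n1 d1 n2 d2 : {poly R}) :
  (n1 * n2)^`() * (d1 * d2) - n1 * n2 * (d1 * d2)^`() =
  (n1^`() * d1 - n1 * d1^`()) * (n2 * d2) + n1 * d1 * (n2^`() * d2 - n2 * d2^`()).
Proof. by rewrite !derivM; ring. Qed.

Lemma quotient_rule_mul (K : fieldType) (a b c d wa wb : K) : b != 0 -> d != 0 ->
  (wa * (c * d) + a * b * wb) / (b * d) ^+ 2 =
  wa / b ^+ 2 * (c / d) + a / b * (wb / d ^+ 2).
Proof. by move=> b_neq0 d_neq0; field; rewrite b_neq0 d_neq0. Qed.

Lemma deriv_quotient_sub (R : comRingType) (n1 d1 n2 d2 : {poly R}) :
  (n1 * d2 - n2 * d1)^`() * (d1 * d2) - (n1 * d2 - n2 * d1) * (d1 * d2)^`() =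
  (n1^`() * d1 - n1 * d1^`()) * d2 ^+ 2 - (n2^`() * d2 - n2 * d2^`()) * d1 ^+ 2.
Proof. by rewrite !(derivB, derivM); ring. Qed.

Lemma quotient_rule_sub (K : fieldType) (b d wa wb : K) : b != 0 -> d != 0 ->
  (wa * d ^+ 2 - wb * b ^+ 2) / (b * d) ^+ 2 = wa / b ^+ 2 - wb / d ^+ 2.
Proof. by move=> b_neq0 d_neq0; field; rewrite b_neq0 d_neq0. Qed.

Section FracDerivative.
Variable F : fieldType.
Implicit Types (f g : ratfun F) (n d : {poly F}).

Lemma dfracE n d : d != 0 ->
  dfrac (n%:F / d%:F) = (n^`() * d - n * d^`())%:F / (d ^+ 2)%:F.
Proof.
move=> d_neq0; rewrite /dfrac; set f := n%:F / d%:F.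
have := tofrac_numden f; have := denom_ratioP (repr f).
set n0 := \n_(repr f); set d0 := \d_(repr f) => d0_neq0 fd0.
have cross : n * d0 = n0 * d.
  apply/eqP; rewrite -tofrac_eq !rmorphM /= -fd0 /f mulrAC divfK //.
  by rewrite tofrac_eq0.
apply/eqP; rewrite eqr_div ?tofrac_eq0 ?expf_neq0 // -!rmorphM tofrac_eq.
by rewrite mulrC -deriv_quotient_scale -cross [d0 * d]mulrC deriv_quotient_scale mulrC.
Qed.

Lemma dfrac_tofrac n : dfrac n%:F = (n^`())%:F.
Proof.
rewrite -[n%:F]divr1 -tofrac1 dfracE ?oner_neq0 //.
by rewrite derivC mulr0 subr0 expr1n tofrac1 !divr1 mulr1.
Qed.

Lemma dfracM f g : dfrac (f * g) = dfrac f * g + f * dfrac g.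
Proof.
have [n1 [d1 [d1_neq0 ->]]] := fracP f; have [n2 [d2 [d2_neq0 ->]]] := fracP g.
rewrite mulf_div -!rmorphM !dfracE ?mulf_neq0 // deriv_quotient_mul.
rewrite tofracD !(tofracXn, tofracM).
by apply: quotient_rule_mul; rewrite tofrac_eq0.
Qed.

Lemma dfracB : zmod_morphism (@dfrac F).
Proof.
move=> f g; have [n1 [d1 [d1_neq0 ->]]] := fracP f.
have [n2 [d2 [d2_neq0 ->]]] := fracP g.
have d1F : d1%:F != 0 by rewrite tofrac_eq0.
have d2F : d2%:F != 0 by rewrite tofrac_eq0.
rewrite -mulNr (addf_div _ _ d1F d2F) mulNr -!tofracM -tofracB.
rewrite !dfracE ?mulf_neq0 // deriv_quotient_sub.
rewrite tofracB !(tofracXn, tofracM).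
exact: (@quotient_rule_sub {fraction {poly F}} _ _ _ _ d1F d2F).
Qed.

End FracDerivative.
Arguments dfracM {F}.

HB.instance Definition _ (F : fieldType) :=
  GRing.isZmodMorphism.Build (ratfun F) (ratfun F) (@dfrac F) (@dfracB F).

Section LogDerivative.
Variables (K : fieldType) (D : K -> K).
Hypothesis DM : forall f g, D (f * g) = D f * g + f * D g.

Definition logder (f : K) := D f / f.

Lemma derivation1 : D 1 = 0.
Proof. by apply: (addrI (D 1)); rewrite addr0 -[in RHS](mulr1 1) DM mulr1 mul1r. Qed.

Lemma logder1 : logder 1 = 0.
Proof. by rewrite /logder derivation1 mul0r. Qed.

Lemma logderM f g : f != 0 -> g != 0 -> logder (f * g) = logder f + logder g.
Proof. by move=> f_neq0 g_neq0; rewrite /logder DM; field; rewrite f_neq0 g_neq0. Qed.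

Lemma logderV f : f != 0 -> logder f^-1 = - logder f.
Proof.
move=> f_neq0; apply/eqP; rewrite -addr_eq0 addrC -logderM ?invr_eq0 //.
by rewrite mulfV // logder1.
Qed.

Lemma logderX f n : f != 0 -> logder (f ^+ n) = n%:R * logder f.
Proof.
move=> f_neq0; elim: n => [|n IHn]; first by rewrite expr0 logder1 mul0r.
by rewrite exprS logderM ?expf_neq0 // IHn mulrSr mulrDl mul1r addrC.
Qed.

Lemma logder_prod (I : Type) (r : seq I) (G : I -> K) :
  (forall i, G i != 0) -> logder (\prod_(i <- r) G i) = \sum_(i <- r) logder (G i).
Proof.
move=> G_neq0; elim: r => [|i r IHr]; first by rewrite !big_nil logder1.
rewrite !big_cons logderM ?IHr // prodf_seq_neq0.
by elim: r {IHr} => //= j r ->; rewrite G_neq0.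
Qed.

End LogDerivative.

Section PrimeCharacteristic.
Variables (K : fieldType) (p : nat).
Hypothesis pK : p \in [pchar K].

Lemma pnat_pchar : [pchar K].-nat p.
Proof. by rewrite (eq_pnat _ (pcharf_eq pK)) pnat_id // (pcharf_prime pK). Qed.

Lemma natr_inj_pchar i j : (i < p)%N -> (j < p)%N -> (i%:R == j%:R :> K) = (i == j).
Proof.
wlog le_ij : i j / (i <= j)%N.
  by move=> W ip jp; case: (leqP i j) => [|/ltnW] /W; rewrite 1?eq_sym => ->.
move=> ip jp; apply/eqP/eqP => [|-> //].
move/eqP; rewrite eq_sym -subr_eq0 -natrB // -(dvdn_pcharf pK) -eqn_mod_dvd //.
by rewrite !modn_small // => /eqP.
Qed.

Lemma prod_XsubC_natr : \prod_(0 <= i < p) ('X - i%:R%:P) = 'X^p - 'X :> {poly K}.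
Proof.
have p_gt1 : (1 < p)%N := prime_gt1 (pcharf_prime pK).
have size_XnsubX : size ('X^p - 'X : {poly K}) = p.+1.
  by rewrite size_addl ?size_polyXn // size_polyN size_polyX.
set rs := [seq i%:R : K | i <- index_iota 0 p].
rewrite -(big_map (fun i => i%:R) xpredT (fun z => 'X - z%:P)) -/rs.
apply/eqP; rewrite -eqp_monic ?monic_prod_XsubC //; last first.
  by rewrite monicE lead_coefDl ?lead_coefXn // size_polyXn size_polyN size_polyX.
rewrite -dvdp_size_eqp ?size_prod_XsubC ?size_map ?size_iota ?size_XnsubX ?subn0 //.
apply: uniq_roots_dvdp.
  apply/allP => _ /mapP[i _ ->]; rewrite /root !hornerE.
  by rewrite -(pFrobenius_autE pK) pFrobenius_aut_nat subrr.
rewrite uniq_rootsE map_inj_in_uniq ?iota_uniq // => i j.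
by rewrite !mem_index_iota => /andP[_ ip] /andP[_ jp] /eqP; rewrite natr_inj_pchar // => /eqP.
Qed.

Lemma prod_subr_natr (t : K) : \prod_(0 <= i < p) (t - i%:R) = t ^+ p - t.
Proof.
have := congr1 (horner^~ t) prod_XsubC_natr.
by rewrite horner_prod !hornerE => <-; apply: eq_bigr => i _; rewrite hornerXsubC.
Qed.

Lemma prod_addr_natr (t : K) : \prod_(0 <= i < p) (t + i%:R) = t ^+ p - t.
Proof.
rewrite (eq_bigr (fun i => -1 * (- t - i%:R))) => [|i _]; last first.
  by rewrite mulN1r opprD !opprK.
rewrite big_split /= prodr_const_nat subn0 prod_subr_natr !exprNn_pchar ?pnat_pchar // expr1n.
by rewrite mulN1r opprB opprK addrC.
Qed.

End PrimeCharacteristic.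

Section NatProducts.
Variables (R : comRingType) (h : nat -> R).

Lemma prod_nat1_expr n : \prod_(1 <= a < n) h a ^+ a = \prod_(0 <= a < n) h a ^+ a.
Proof.
case: n => [|n]; first by rewrite !big_geq.
by rewrite [RHS]big_ltn // expr0 mul1r.
Qed.

Lemma prod_nat_shift_expr n :
  \prod_(0 <= a < n) h a.+1 ^+ a.+1 = h n ^+ n * \prod_(0 <= a < n) h a ^+ a.
Proof.
have : \prod_(0 <= a < n.+1) h a ^+ a = \prod_(0 <= a < n) h a ^+ a * h n ^+ n.
  exact: big_nat_recr.
by rewrite big_nat_recl // expr0 mul1r => ->; rewrite mulrC.
Qed.

Lemma prod_nat_rot n : h n = h 0 -> \prod_(0 <= a < n) h a.+1 = \prod_(0 <= a < n) h a.
Proof.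
case: n => [|n] hn; first by rewrite !big_geq.
by rewrite big_nat_recr // big_nat_recl //= hn mulrC.
Qed.

End NatProducts.

(* [delta] over an arbitrary field: [delta p beta t] is convertible to
   [gen_delta p (rc beta) t]. *)
Definition gen_delta (K : fieldType) (p : nat) (b t : K) : K :=
  \prod_(1 <= a < p) ((b - (t + a%:R)) / (t + a%:R)) ^+ a.

Section ArtinSchreierDelta.
Variables (K : fieldType) (p : nat) (D : {additive K -> K}) (y b : K).
Hypotheses (DM : forall f g, D (f * g) = D f * g + f * D g) (pK : p \in [pchar K]).
Hypotheses (Dy : D y = 1) (Db : D b = 0) (b_AS : b ^+ p - b = 1).
Hypotheses (yaddn_neq0 : forall a : nat, y + a%:R != 0)
           (bsubn_neq0 : forall a : nat, b - (y + a%:R) != 0).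

Local Notation x := (y ^+ p - y).
Local Notation dlog := (logder D).
Let h (a : nat) : K := (b - (y + a%:R)) / (y + a%:R).

Lemma derivation_natr (a : nat) : D a%:R = 0.
Proof. by rewrite raddfMn (derivation1 DM) mul0rn. Qed.

Lemma derivation_exp_pchar f : f != 0 -> D (f ^+ p) = 0.
Proof.
move=> f_neq0; have := logderX DM p f_neq0; rewrite (pcharf0 pK) mul0r.
by move/eqP; rewrite mulf_eq0 invr_eq0 expf_eq0 (negPf f_neq0) andbF orbF => /eqP.
Qed.

Lemma D_yaddn (a : nat) : D (y + a%:R) = 1.
Proof. by rewrite raddfD Dy derivation_natr addr0. Qed.

Lemma D_bsubn (a : nat) : D (b - (y + a%:R)) = -1.
Proof. by rewrite raddfB Db D_yaddn sub0r. Qed.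

Lemma D_x : D x = -1.
Proof.
have y_neq0 : y != 0 by have := yaddn_neq0 0; rewrite addr0.
by rewrite raddfB derivation_exp_pchar // Dy sub0r.
Qed.

Lemma D_onem_x : D (1 - x) = 1.
Proof. by rewrite raddfB (derivation1 DM) D_x sub0r opprK. Qed.

Lemma b_expp : b ^+ p = b + 1.
Proof. by rewrite -b_AS addrC subrK. Qed.

Lemma prod_yaddn : \prod_(0 <= a < p) (y + a%:R) = x.
Proof. exact: prod_addr_natr. Qed.

Lemma prod_bsubn : \prod_(0 <= a < p) (b - (y + a%:R)) = 1 - x.
Proof.
under eq_bigr do rewrite opprD addrA.
rewrite (prod_subr_natr pK) exprDn_pchar ?exprNn_pchar ?(pnat_pchar pK) // b_expp.
by ring.
Qed.

Lemma x_neq0 : x != 0.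
Proof. by rewrite -prod_yaddn prodf_seq_neq0; apply/allP => a _; rewrite yaddn_neq0. Qed.

Lemma onem_x_neq0 : 1 - x != 0.
Proof. by rewrite -prod_bsubn prodf_seq_neq0; apply/allP => a _; rewrite bsubn_neq0. Qed.

Lemma sum_inv_yaddn : \sum_(0 <= a < p) (y + a%:R)^-1 = - x^-1.
Proof.
have := logder_prod DM (index_iota 0 p) yaddn_neq0.
rewrite prod_yaddn /logder D_x mulN1r => ->.
by apply: eq_bigr => a _; rewrite D_yaddn mul1r.
Qed.

Lemma sum_inv_bsubn : \sum_(0 <= a < p) (b - (y + a%:R))^-1 = - (1 - x)^-1.
Proof.
have := logder_prod DM (index_iota 0 p) bsubn_neq0.
rewrite prod_bsubn /logder D_onem_x mul1r => ->.
by rewrite -sumrN; apply: eq_bigr => a _; rewrite D_bsubn mulN1r opprK.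
Qed.

Lemma h_neq0 (a : nat) : h a != 0.
Proof. by rewrite mulf_neq0 ?invr_eq0. Qed.

Lemma delta_h : gen_delta p b y = \prod_(0 <= a < p) h a ^+ a.
Proof. by rewrite /gen_delta prod_nat1_expr. Qed.

Lemma dlog_h_expr (a : nat) :
  dlog (h a ^+ a) = y * (y + a%:R)^-1 - (b - y) * (b - (y + a%:R))^-1.
Proof.
have u_neq0 := yaddn_neq0 a; have v_neq0 := bsubn_neq0 a.
rewrite (logderX DM) ?h_neq0 // (logderM DM) ?invr_eq0 // (logderV DM) // /logder.
by rewrite D_yaddn D_bsubn; field; rewrite u_neq0 v_neq0.
Qed.

Lemma dlog_delta :
  y ^+ p * (D x / x) - (b - y) ^+ p * (D x / (1 - x)) = dlog (gen_delta p b y).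
Proof.
have pn := pnat_pchar pK.
rewrite delta_h (logder_prod DM); last by move=> a; rewrite expf_neq0 ?h_neq0.
under eq_bigr do rewrite dlog_h_expr.
rewrite sumrB -!mulr_sumr sum_inv_yaddn sum_inv_bsubn D_x.
rewrite exprDn_pchar // exprNn_pchar // b_expp.
by field; rewrite x_neq0 onem_x_neq0.
Qed.

Lemma delta_shift :
  gen_delta p b (y + 1) / gen_delta p b y = x / (1 - x) * ((b - y) / y) ^+ p.
Proof.
have -> : (b - y) / y = h 0 by rewrite /h addr0.
have delta1_h : gen_delta p b (y + 1) = \prod_(0 <= a < p) h a.+1 ^+ a.
  by rewrite /gen_delta prod_nat1_expr; apply: eq_bigr => a _; rewrite -addrA nat1r.
have h_p : h p = h 0 by rewrite /h (pcharf0 pK).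
have prod_h : \prod_(0 <= a < p) h a = (1 - x) / x.
  by rewrite prodf_div prod_yaddn prod_bsubn.
have := prod_nat_shift_expr h p.
under eq_bigr do rewrite exprSr.
rewrite big_split /= (prod_nat_rot h_p) prod_h h_p -delta1_h -delta_h => shift.
have delta_neq0 : gen_delta p b y != 0.
  by rewrite delta_h prodf_seq_neq0; apply/allP => a _; rewrite expf_neq0 ?h_neq0.
rewrite -[gen_delta p b (y + 1)](mulfK (_ : (1 - x) / x != 0)) ?shift.
  by field; rewrite delta_neq0 x_neq0 onem_x_neq0.
by rewrite mulf_neq0 ?invr_eq0 ?x_neq0 ?onem_x_neq0.
Qed.

End ArtinSchreierDelta.

Theorem mainTheorem12 (p : nat) (F : finFieldType) (beta : F) :
  prime p -> #|F| = (p ^ 2)%N -> beta ^+ p - beta = 1 ->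
  let y := ry F in
  let x := y ^+ p - y in
  (* (i) identity of differentials in Omega^1_{F(y)/F} (coefficients of dy) *)
  (y ^+ p * (dfrac x / x) - (rc beta - y) ^+ p * (dfrac x / (1 - x))
     = dfrac (delta p beta y) / delta p beta y)
  /\
  (* (ii) delta(y+1)/delta(y) = x/(1-x) modulo F(y)^{x p} *)
  (exists g : ratfun F, g != 0 /\
     delta p beta (y + 1) / delta p beta y = x / (1 - x) * g ^+ p).
Proof.
move=> p_prime cardF beta_AS y x.
have pK : p \in [pchar (ratfun F)].
  apply: (rmorph_pchar (@FracField.tofrac _)); apply: (rmorph_pchar (@polyC F)).
  exact: card_finPcharP cardF p_prime.
have Dy : dfrac y = 1 by rewrite dfrac_tofrac derivX tofrac1.
have Db : dfrac (rc beta) = 0 by rewrite dfrac_tofrac derivC tofrac0.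
have b_AS : rc beta ^+ p - rc beta = 1.
  by rewrite /rc -!rmorphXn -!rmorphB beta_AS !rmorph1.
have yaddn_neq0 (a : nat) : y + a%:R != 0.
  have -> : y + a%:R = ('X + a%:R%:P)%:F by rewrite rmorphD !rmorph_nat.
  by rewrite tofrac_eq0 monic_neq0 ?monicXaddC.
have bsubn_neq0 (a : nat) : rc beta - (y + a%:R) != 0.
  have -> : rc beta - (y + a%:R) = ((beta - a%:R)%:P - 'X)%:F.
    by rewrite polyCB !tofracB !rmorph_nat opprD addrA addrAC.
  by rewrite tofrac_eq0 -oppr_eq0 opprB monic_neq0 ?monicXsubC.
split; first exact: (dlog_delta dfracM pK Dy Db b_AS yaddn_neq0 bsubn_neq0).
have y_neq0 : y != 0 by move: (yaddn_neq0 0); rewrite addr0.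
have b_sub_y : rc beta - y != 0 by move: (bsubn_neq0 0); rewrite addr0.
exists ((rc beta - y) / y); split; first exact: mulf_neq0 b_sub_y (invr_neq0 y_neq0).
exact: (delta_shift pK b_AS yaddn_neq0 bsubn_neq0).
Qed.
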